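(* Let $\beta\in(0,\tfrac12)$ and let $\lambda\in(0,1)$ be a principal eigenvalue of $\Delta_\beta$ with a non-negative eigenfunction $u$. Then the function $\bar u(x)=m^{-|x|}\sum_{y\in\mathbb{T}_m:\,|y|=|x|}u(y)$ is a strictly positive eigenfunction associated with $\lambda$ (in particular $\lim_{x\to y}\bar u(x)=0$ for every branch $y$), it is constant on each level, and it is strictly decreasing with respect to the level.
   Context: Tree: for an integer $m\ge2$, $\mathbb{T}_m$ has vertices the root $\emptyset$ and all finite sequences $(\emptyset,a_1,\dots,a_k)$, $a_i\in\{0,\dots,m-1\}$; $|x|$ is the level, successors of $x$ are $(x,i)$, $\hat x$ is the immediate predecessor of $x\ne\emptyset$. A branch is an infinite sequence $(x_n)_{n\ge0}$ with $x_0=\emptyset$, $x_{n+1}$ a successor of $x_n$; $\lim_{x\to y}u(x)=\lim_n u(x_n)$ for a branch $y=(x_n)$. Operator: $p_\beta=\beta/(1-\beta)$ for $\beta\in(0,1)$. $\Delta_\beta u(\emptyset)=\frac1m\sum_{i=0}^{m-1}u(\emptyset,i)-u(\emptyset)$ and, for $x\ne\emptyset$, $\Delta_\beta u(x)=\big(\beta u(\hat x)+\frac{1-\beta}{m}\sum_{i=0}^{m-1}u(x,i)-u(x)\big)p_\beta^{-|x|}$. Eigenvalues: $\lambda\in\mathbb{R}$ is an eigenvalue of $\Delta_\beta$ if there is a bounded $u\not\equiv0$ with $-\Delta_\beta u=\lambda u$ on $\mathbb{T}_m$ and $\lim_{x\to y}u(x)=0$ for every branch $y$ ($u$ is an eigenfunction);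 an eigenvalue $\lambda>0$ is principal if it has a non-negative eigenfunction. *)

From HB Require Import structures.
From mathcomp Require Import all_boot all_order all_algebra.
From mathcomp Require Import all_classical all_reals all_analysis.
Set Implicit Arguments. Unset Strict Implicit. Unset Printing Implicit Defensive.
Import Order.TTheory GRing.Theory Num.Theory.
Import numFieldNormedType.Exports.
Local Open Scope ring_scope.
Local Open Scope classical_set_scope.

(* The vertex (root, a_1, ..., a_k) is
   represented by the REVERSED list [:: a_k; ...; a_1] : seq 'I_m.
   Hence: root = [::], successor (x,i) = i :: x, predecessor x^ = behead x,
   level |x| = size x. *)
Definition vertex (m : nat) := seq 'I_m.

Definition pbeta (R : realType) (beta : R) : R := beta / (1 - beta).

Definition Delta (R : realType) (m : nat) (beta : R) (u : vertex m -> R)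
  (x : vertex m) : R :=
  match x with
  | [::] => (m%:R)^-1 * (\sum_(i < m) u [:: i]) - u [::]
  | _ :: _ =>
      (beta * u (behead x) + (1 - beta) / m%:R * (\sum_(i < m) u (i :: x)) - u x)
        * (pbeta beta) ^- (size x)
  end.

Definition is_branch (m : nat) (b : nat -> vertex m) : Prop :=
  b 0%N = [::] /\ forall n, exists i : 'I_m, b n.+1 = i :: b n.

Definition bounded_fun (R : realType) (m : nat) (u : vertex m -> R) : Prop :=
  exists M : R, forall x, `|u x| <= M.

Definition is_eigenfunction (R : realType) (m : nat) (beta lambda : R)
  (u : vertex m -> R) : Prop :=
  [/\ bounded_fun u,
      exists x, u x != 0,
      forall x, - Delta beta u x = lambda * u x
    & forall b, is_branch b -> u (b n) @[n --> \oo] --> (0 : R)].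

Definition is_eigenvalue (R : realType) (m : nat) (beta lambda : R) : Prop :=
  exists u : vertex m -> R, is_eigenfunction beta lambda u.

Definition is_principal_eigenvalue (R : realType) (m : nat) (beta lambda : R)
  : Prop :=
  0 < lambda /\
  exists u : vertex m -> R, is_eigenfunction beta lambda u /\ forall x, 0 <= u x.

Definition level_avg (R : realType) (m : nat) (u : vertex m -> R)
  (x : vertex m) : R :=
  (m%:R) ^- (size x) * \sum_(t : (size x).-tuple 'I_m) u (tval t).

From HB Require Import structures.
From mathcomp Require Import all_boot all_order all_algebra.
From mathcomp Require Import all_classical all_reals all_analysis.
From mathcomp Require Import ring lra.
Set Implicit Arguments. Unset Strict Implicit. Unset Printing Implicit Defensive.
Import Order.TTheory GRing.Theory Num.Theory.
Import numFieldNormedType.Exports.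
Local Open Scope ring_scope.
Local Open Scope classical_set_scope.

(* Averaging the eigenvalue equation over a level turns it into the recursion
   (1 - beta) a_(k+2) = (1 - lambda p^(k+1)) a_(k+1) - beta a_k,  a_1 = (1 - lambda) a_0
   for the level means a_k (p = p_beta), so the radial function a_|x| is again an
   eigenfunction.  The recursion gives a_(k+1) - a_k <= - lambda p^k a_0, hence a is
   nonincreasing, a_0 > 0 because u is nonnegative and not identically 0, and then a is
   strictly decreasing.
   For the decay, psi y = u y - p u(y^) - K p^|y| does not decrease when passing from y
   to a child where u is at least its mean over the children.  Following such children
   from y gives a branch along which u -> 0, so psi y <= 0, i.e. u y <= p u(y^) + K p^|y|.
   As beta < 1/2 means p < 1, this yields u y <= B q^|y| for any q in (p, 1), and the
   level means tend to 0. *)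

Section LevelMean.
Variables (R : realType) (m : nat).
Implicit Types (f g : vertex m -> R).

Definition level_mean f (n : nat) : R :=
  (m%:R) ^- n * \sum_(t : n.-tuple 'I_m) f t.

Lemma sum_tuple0 f : \sum_(t : 0.-tuple 'I_m) f t = f [::].
Proof.
by rewrite (eq_bigr (fun=> f [::])) => [|t _]; rewrite ?sumr_const ?card_tuple ?tuple0.
Qed.

Lemma sum_tupleS n f :
  \sum_(t : n.+1.-tuple 'I_m) f t = \sum_(t : n.-tuple 'I_m) \sum_(i < m) f (i :: t).
Proof.
rewrite pair_big /=.
rewrite (reindex (fun p : n.-tuple 'I_m * 'I_m => [tuple of p.2 :: p.1])) //=.
exists (fun t : n.+1.-tuple 'I_m => (behead_tuple t, thead t)).
  by move=> [t i] _ /=; congr pair; apply: val_inj.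
by move=> [[|i s] //= hs] _; apply: val_inj.
Qed.

Lemma level_mean0 f : level_mean f 0 = f [::].
Proof. by rewrite /level_mean expr0 invr1 mul1r sum_tuple0. Qed.

Lemma eq_level_mean n f g :
  (forall t : n.-tuple 'I_m, f t = g t) -> level_mean f n = level_mean g n.
Proof. by move=> efg; rewrite /level_mean (eq_bigr _ (fun t _ => efg t)). Qed.

Lemma level_meanB n f g :
  level_mean (fun y => f y - g y) n = level_mean f n - level_mean g n.
Proof. by rewrite /level_mean sumrB mulrBr. Qed.

Lemma level_meanZ n (c : R) f :
  level_mean (fun y => c * f y) n = c * level_mean f n.
Proof. by rewrite /level_mean -mulr_sumr mulrCA. Qed.

Lemma level_mean_children n f :
  level_mean (fun y => (m%:R)^-1 * \sum_(i < m) f (i :: y)) n = level_mean f n.+1.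
Proof. by rewrite /level_mean sum_tupleS -mulr_sumr mulrA -!exprVn -exprSr. Qed.

Hypothesis m_gt0 : (0 < m)%N.

Let m_neq0 : (m%:R : R) != 0. Proof. by rewrite pnatr_eq0 -lt0n. Qed.

Lemma level_mean_behead n f :
  level_mean (fun y => f (behead y)) n.+1 = level_mean f n.
Proof.
rewrite -level_mean_children; apply: eq_level_mean => t /=.
by rewrite sumr_const card_ord -[f t *+ m]mulr_natl mulKf.
Qed.

Lemma level_mean_ub n f (c : R) :
  (forall t : n.-tuple 'I_m, f t <= c) -> level_mean f n <= c.
Proof.
move=> fc; rewrite /level_mean ler_pdivrMl ?exprn_gt0 ?ltr0n //.
apply: le_trans (ler_sum _ (fun t _ => fc t)) _.
by rewrite sumr_const card_tuple card_ord -natrX mulr_natl.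
Qed.

Lemma level_mean_lb n f (c : R) :
  (forall t : n.-tuple 'I_m, c <= f t) -> c <= level_mean f n.
Proof.
move=> fc; rewrite /level_mean ler_pdivlMl ?exprn_gt0 ?ltr0n //.
apply: le_trans (ler_sum _ (fun t _ => fc t)).
by rewrite sumr_const card_tuple card_ord -natrX mulr_natl.
Qed.

Lemma level_mean_gt0 f x :
  (forall y, 0 <= f y) -> 0 < f x -> 0 < level_mean f (size x).
Proof.
move=> f_ge0 fx_gt0; rewrite /level_mean mulr_gt0 ?invr_gt0 ?exprn_gt0 ?ltr0n //.
rewrite (bigD1 (in_tuple x)) //=.
by rewrite ltr_wpDr // sumr_ge0.
Qed.

Lemma exists_child_ge_mean f y :
  exists i : 'I_m, (m%:R)^-1 * \sum_(j < m) f (j :: y) <= f (i :: y).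
Proof.
exists [arg max_(i > Ordinal m_gt0) f (i :: y)]%O.
case: arg_maxP => // i _ i_max.
rewrite -[f (i :: y)](mulKf m_neq0) ler_wpM2l ?invr_ge0 ?ler0n //.
apply: le_trans (ler_sum _ (fun j _ => i_max j isT)) _.
by rewrite sumr_const card_ord mulr_natl.
Qed.

End LevelMean.

Lemma pbeta_gt0 (R : realType) (beta : R) : 0 < beta -> beta < 1 -> 0 < pbeta beta.
Proof. by move=> beta_gt0 beta_lt1; rewrite divr_gt0 // subr_gt0. Qed.

Lemma pbeta_lt1 (R : realType) (beta : R) : 0 < beta -> beta < 1 / 2 -> pbeta beta < 1.
Proof. by move=> beta_gt0 beta_lt; rewrite ltr_pdivrMr ?subr_gt0; lra. Qed.

Section RadialDelta.
Variables (R : realType) (m : nat) (beta lambda : R).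
Hypotheses (m_gt0 : (0 < m)%N) (beta_gt0 : 0 < beta) (beta_lt1 : beta < 1).

Lemma Delta_radial_eigen (w : nat -> R) :
  w 1 = (1 - lambda) * w 0 ->
  (forall k, (1 - beta) * w k.+2 =
     (1 - lambda * pbeta beta ^+ k.+1) * w k.+1 - beta * w k) ->
  forall x : vertex m, - Delta beta (fun y => w (size y)) x = lambda * w (size x).
Proof.
have m_neq0 : (m%:R : R) != 0 by rewrite pnatr_eq0 -lt0n.
move=> w1 wS [|j z]; rewrite /Delta /= sumr_const card_ord.
  by rewrite -[w 1 *+ m]mulr_natl mulKf // w1; ring.
have P_neq0 : pbeta beta ^+ (size z).+1 != 0 by rewrite expf_neq0 // gt_eqF ?pbeta_gt0.
rewrite -[w _ *+ m]mulr_natl mulrA divfK // wS.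
by field.
Qed.

End RadialDelta.

Section EigenLevelMean.
Variables (R : realType) (m : nat) (beta lambda : R) (u : vertex m -> R).
Hypotheses (beta_gt0 : 0 < beta) (beta_lt1 : beta < 1).
Hypothesis u_eigen : forall x, - Delta beta u x = lambda * u x.

Lemma Delta_eigen_root :
  (m%:R)^-1 * \sum_(i < m) u [:: i] = (1 - lambda) * u [::].
Proof. by have := u_eigen [::]; rewrite /Delta; lra. Qed.

Lemma Delta_eigen_cons y : (0 < size y)%N ->
  (1 - beta) * ((m%:R)^-1 * \sum_(i < m) u (i :: y)) =
  (1 - lambda * pbeta beta ^+ size y) * u y - beta * u (behead y).
Proof.
case: y => [//|j z] _; have := u_eigen (j :: z); rewrite /Delta.
have P_neq0 : pbeta beta ^+ size (j :: z) != 0 by rewrite expf_neq0 // gt_eqF ?pbeta_gt0.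
move=> /(congr1 (fun r => - r * pbeta beta ^+ size (j :: z))).
rewrite opprK divfK //= mulrA; lra.
Qed.

Lemma level_mean_eigen1 : level_mean u 1 = (1 - lambda) * level_mean u 0.
Proof. by rewrite -level_mean_children !level_mean0 Delta_eigen_root. Qed.

Hypothesis m_gt0 : (0 < m)%N.

Lemma level_mean_eigenS k :
  (1 - beta) * level_mean u k.+2 =
  (1 - lambda * pbeta beta ^+ k.+1) * level_mean u k.+1 - beta * level_mean u k.
Proof.
rewrite -level_mean_children -[(1 - beta) * _]level_meanZ.
rewrite -[level_mean u k](level_mean_behead m_gt0).
rewrite -[_ * level_mean u _]level_meanZ -[beta * _]level_meanZ -level_meanB.
apply: eq_level_mean => t; by rewrite Delta_eigen_cons size_tuple.
Qed.

End EigenLevelMean.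

Section RadialSequence.
Variables (R : realType) (beta lambda : R) (a : nat -> R).
Hypotheses (beta_gt0 : 0 < beta) (beta_lt1 : beta < 1) (lambda_ge0 : 0 <= lambda).
Hypotheses (a_ge0 : forall k, 0 <= a k) (a1 : a 1 = (1 - lambda) * a 0).
Hypothesis aS : forall k,
  (1 - beta) * a k.+2 = (1 - lambda * pbeta beta ^+ k.+1) * a k.+1 - beta * a k.

Lemma radial_step_le k : a k.+1 - a k <= - (lambda * pbeta beta ^+ k * a 0).
Proof.
elim: k => [|k IH]; first by rewrite a1 expr0 mulr1; lra.
set c := pbeta beta in IH *.
have beta1_gt0 : 0 < 1 - beta by rewrite subr_gt0.
have betaE : beta = (1 - beta) * c by rewrite mulrC divfK ?gt_eqF.
have incrE : (1 - beta) * (a k.+2 - a k.+1) =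
    beta * (a k.+1 - a k) - lambda * c ^+ k.+1 * a k.+1 by rewrite mulrBr aS; ring.
have drift_ge0 : 0 <= lambda * c ^+ k.+1 * a k.+1.
  by rewrite !mulr_ge0 // exprn_ge0 // ltW ?pbeta_gt0.
have decayE : beta * - (lambda * c ^+ k * a 0) = (1 - beta) * - (lambda * c ^+ k.+1 * a 0).
  by rewrite {1}betaE exprS; ring.
rewrite -(ler_pM2l beta1_gt0) incrE -decayE.
have := ler_wpM2l (ltW beta_gt0) IH; lra.
Qed.

Lemma radial_nonincreasing i j : (i <= j)%N -> a j <= a i.
Proof.
apply: Order.NatMonotonyTheory.nonincnP => {i j} k.
have := radial_step_le k.
have : 0 <= lambda * pbeta beta ^+ k * a 0 by rewrite !mulr_ge0 // exprn_ge0 // ltW ?pbeta_gt0.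
lra.
Qed.

Lemma radial_decreasing i j : 0 < lambda -> 0 < a 0 -> (i < j)%N -> a j < a i.
Proof.
move=> lambda_gt0 a0_gt0; apply: Order.NatMonotonyTheory.nhomo_ltn_lt => {i j} k.
have := radial_step_le k.
have : 0 < lambda * pbeta beta ^+ k * a 0 by rewrite !mulr_gt0 // exprn_gt0 ?pbeta_gt0.
lra.
Qed.

End RadialSequence.

Fixpoint branch_of (m : nat) (next : nat -> vertex m -> 'I_m) (n : nat) : vertex m :=
  if n is k.+1 then next k (branch_of next k) :: branch_of next k else [::].

Lemma branch_of_is_branch m (next : nat -> vertex m -> 'I_m) : is_branch (branch_of next).
Proof. by split=> // n; exists (next n (branch_of next n)). Qed.

Lemma exists_branch_through m (y : vertex m) (g : vertex m -> 'I_m) :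
  exists b, [/\ is_branch b, b (size y) = y &
    forall n, (size y <= n)%N -> b n.+1 = g (b n) :: b n].
Proof.
pose next k z := if (k < size y)%N then nth (g [::]) y (size y - k.+1) else g z.
exists (branch_of next); split; first exact: branch_of_is_branch.
  have branch_prefix k : (k <= size y)%N -> branch_of next k = drop (size y - k) y.
    elim: k => [_|k IH lt_ky] /=; first by rewrite subn0 drop_size.
    rewrite IH 1?ltnW // /next lt_ky [in RHS](drop_nth (g [::])) ?subnSK ?leq_subr //.
  by rewrite branch_prefix // subnn drop0.
by move=> n le_yn /=; rewrite /next ltnNge le_yn.
Qed.

Lemma size_branch m (b : nat -> vertex m) n : is_branch b -> size (b n) = n.
Proof.
case=> b0 bS; elim: n => [|n IH]; first by rewrite b0.
by have [i ->] := bS n; rewrite /= IH.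
Qed.

Section Decay.
Variables (R : realType) (m : nat) (beta lambda M : R) (u : vertex m -> R).
Hypotheses (m_gt0 : (0 < m)%N) (beta_gt0 : 0 < beta) (beta_lt_half : beta < 1 / 2).
Hypotheses (lambda_ge0 : 0 <= lambda) (u_ge0 : forall x, 0 <= u x) (u_le : forall x, u x <= M).
Hypothesis u_eigen : forall x, - Delta beta u x = lambda * u x.
Hypothesis u_branch : forall b, is_branch b -> u (b n) @[n --> \oo] --> 0.

Let beta_lt1 : beta < 1. Proof. by move: beta_lt_half; lra. Qed.
Let p_gt0 : 0 < pbeta beta. Proof. exact: pbeta_gt0. Qed.
Let p_lt1 : pbeta beta < 1. Proof. exact: pbeta_lt1. Qed.

Let K := lambda * M / (1 - beta) / (1 - pbeta beta).

Let M_ge0 : 0 <= M. Proof. exact: le_trans (u_ge0 [::]) (u_le [::]). Qed.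

Let K_ge0 : 0 <= K. Proof. by rewrite !divr_ge0 ?mulr_ge0 // subr_ge0 ltW. Qed.

Let psi y := u y - pbeta beta * u (behead y) - K * pbeta beta ^+ size y.

Lemma psi_children_mean y : (0 < size y)%N ->
  (m%:R)^-1 * \sum_(j < m) u (j :: y) - pbeta beta * u y - K * pbeta beta ^+ (size y).+1
  = psi y + lambda * pbeta beta ^+ size y * (M - u y) / (1 - beta).
Proof.
move=> y_gt0; have := Delta_eigen_cons beta_gt0 beta_lt1 u_eigen y_gt0.
rewrite /psi /K exprS; move: (pbeta beta ^+ size y) (_ * \sum_(j < m) _) => P A AE.
have beta1_neq0 : 1 - beta != 0 by rewrite subr_eq0 gt_eqF.
have beta2_neq0 : 1 - beta - beta != 0 by apply: lt0r_neq0; move: beta_lt_half; lra.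
have AE' : A = ((1 - lambda * P) * u y - beta * u (behead y)) / (1 - beta).
  by rewrite -AE mulrC mulKf.
by rewrite AE' /pbeta; field; rewrite beta1_neq0.
Qed.

Lemma psi_le_greedy y i : (0 < size y)%N ->
  (m%:R)^-1 * \sum_(j < m) u (j :: y) <= u (i :: y) -> psi y <= psi (i :: y).
Proof.
move=> y_gt0 mean_le; have := psi_children_mean y_gt0.
have : 0 <= lambda * pbeta beta ^+ size y * (M - u y) / (1 - beta).
  by rewrite divr_ge0 ?mulr_ge0 ?exprn_ge0 ?subr_ge0 ?u_le // ltW // subr_gt0.
rewrite /psi /= exprS; lra.
Qed.

Lemma psi_le0 y : (0 < size y)%N -> psi y <= 0.
Proof.
move=> y_gt0.
have [g g_greedy] := choice (fun z => exists_child_ge_mean m_gt0 u z).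
have [b [b_branch b_y b_next]] := exists_branch_through y g.
have psi_along j : psi y <= psi (b (size y + j)%N).
  elim: j => [|j IH]; first by rewrite addn0 b_y.
  rewrite addnS b_next ?leq_addr //; apply: le_trans IH (psi_le_greedy _ _).
    by rewrite size_branch // addn_gt0 y_gt0.
  exact: g_greedy.
have psi_le_u z : psi z <= u z.
  have := mulr_ge0 (ltW p_gt0) (u_ge0 (behead z)).
  have := mulr_ge0 K_ge0 (exprn_ge0 (size z) (ltW p_gt0)).
  rewrite /psi; lra.
rewrite -(cvg_lim (@Rhausdorff R) (u_branch b_branch)).
apply: (limr_ge (cvgP _ (u_branch b_branch))).
exists (size y) => // n /= le_yn.
by rewrite -(subnKC le_yn); apply: le_trans (psi_along _) (psi_le_u _).
Qed.

Lemma u_le_geometric q y : pbeta beta < q ->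
  u y <= (M + K * pbeta beta / (q - pbeta beta)) * q ^+ size y.
Proof.
move=> p_lt_q; set B := M + _.
have qp_gt0 : 0 < q - pbeta beta by rewrite subr_gt0.
have K_le : K * pbeta beta <= (q - pbeta beta) * B.
  have := mulr_ge0 (ltW qp_gt0) M_ge0.
  by rewrite /B mulrDr [_ * (K * _ / _)]mulrC divfK ?gt_eqF //; lra.
elim: y => [|i y IH].
  rewrite expr0 mulr1 /B; apply: le_trans (u_le _) _.
  by rewrite lerDl divr_ge0 ?(mulr_ge0 K_ge0 (ltW p_gt0)) ?(ltW qp_gt0).
have := psi_le0 (y := i :: y) isT; rewrite /psi /= !exprS.
have p_le_q : pbeta beta ^+ size y <= q ^+ size y.
  by rewrite lerXn2r ?nnegrE ?ltW // (lt_trans p_gt0).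
have q_ge0 : 0 <= q ^+ size y by rewrite exprn_ge0 // ltW // (lt_trans p_gt0).
have := ler_wpM2l (ltW p_gt0) IH.
have := ler_wpM2l (mulr_ge0 K_ge0 (ltW p_gt0)) p_le_q.
have := ler_wpM2r q_ge0 K_le.
move: (q ^+ size y) (pbeta beta ^+ size y) => Q P; lra.
Qed.

Lemma level_mean_cvg0 : level_mean u n @[n --> \oo] --> 0.
Proof.
pose q := (1 + pbeta beta) / 2; pose B := M + K * pbeta beta / (q - pbeta beta).
have p_lt_q : pbeta beta < q by move: p_lt1; rewrite /q; lra.
have q_gt0 : 0 < q by move: p_gt0; rewrite /q; lra.
have q_lt1 : `|q| < 1 by rewrite ger0_norm ?ltW //; move: p_lt1; rewrite /q; lra.
apply: (@squeeze_cvgr _ _ _ _ (fun=> 0) (fun n => q ^+ n * B)).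
- near=> n; rewrite level_mean_lb ?level_mean_ub // => t.
  by have := u_le_geometric t p_lt_q; rewrite size_tuple mulrC.
- exact: cvg_cst.
- by rewrite -(mul0r B); apply: cvgMl; apply: cvg_expr.
Unshelve. all: by end_near.
Qed.

End Decay.

Theorem lemma5p4 (R : realType) (m : nat) (beta lambda : R)
  (u : vertex m -> R) :
  (2 <= m)%N ->
  0 < beta -> beta < 1 / 2 ->
  0 < lambda -> lambda < 1 ->
  is_principal_eigenvalue m beta lambda ->
  is_eigenfunction beta lambda u -> (forall x, 0 <= u x) ->
  [/\ is_eigenfunction beta lambda (level_avg u),
      forall x, 0 < level_avg u x,
      forall b, is_branch b -> level_avg u (b n) @[n --> \oo] --> (0 : R),
      forall x y : vertex m, size x = size y -> level_avg u x = level_avg u y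
    & forall x y : vertex m, (size x < size y)%N -> level_avg u y < level_avg u x].
Proof.
move=> m_ge2 beta_gt0 beta_lt_half lambda_gt0 _ _ [[M u_bound] [x ux_neq0] u_eigen u_branch] u_ge0.
have m_gt0 : (0 < m)%N by apply: ltnW.
have beta_lt1 : beta < 1 by lra.
have u_le y : u y <= M by apply: le_trans (ler_norm _) (u_bound y).
have a_ge0 k : 0 <= level_mean u k by apply: level_mean_lb.
have a1 := level_mean_eigen1 u_eigen.
have aS := level_mean_eigenS beta_gt0 beta_lt1 u_eigen m_gt0.
have a_noninc := radial_nonincreasing beta_gt0 beta_lt1 (ltW lambda_gt0) a_ge0 a1 aS.
have a0_gt0 : 0 < level_mean u 0.
  apply: lt_le_trans (a_noninc _ _ (leq0n (size x))).
  by apply: level_mean_gt0 => //; rewrite lt0r ux_neq0 u_ge0.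
have a_decr := radial_decreasing beta_gt0 beta_lt1 (ltW lambda_gt0) a_ge0 a1 aS lambda_gt0 a0_gt0.
have a_gt0 k : 0 < level_mean u k by apply: le_lt_trans (a_ge0 k.+1) (a_decr _ _ _).
have branch_cvg0 b : is_branch b -> level_avg u (b n) @[n --> \oo] --> 0.
  move=> b_branch; rewrite (_ : (fun n => _) = level_mean u).
    exact: (level_mean_cvg0 m_gt0 beta_gt0 beta_lt_half (ltW lambda_gt0) u_ge0 u_le u_eigen).
  by apply: funext => n; rewrite /level_avg size_branch.
split=> //.
- split=> //.
  + by exists (level_mean u 0) => y; rewrite ger0_norm; [exact: a_noninc | exact: a_ge0].
  + by exists [::]; rewrite gt_eqF.
  + exact: (Delta_radial_eigen m_gt0 beta_gt0 beta_lt1 a1 aS).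
- by move=> y; apply: a_gt0.
- by move=> y z eq_yz; rewrite /level_avg eq_yz.
- by move=> y z; apply: a_decr.
Qed.
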